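(* Let $X$ be a real reflexive Banach space, let $h\in\mathcal{H}$ and $(x,x^{\ast})\in X\times X^{\ast}$. If $\max\{(\mathcal{A}h)(x,x^{\ast}),((\mathcal{A}h)^{\ast}\circ i)(x,x^{\ast})\}=+\infty$, then $(\mathcal{A}^{\infty}h)(x,x^{\ast})=+\infty$. If $\max\{(\mathcal{A}h)(x,x^{\ast}),((\mathcal{A}h)^{\ast}\circ i)(x,x^{\ast})\}<+\infty$, $\epsilon>0$, and $n$ is an integer with $n>1+\log_2\big((\mathcal{A}h)(x,x^{\ast})-((\mathcal{A}h)^{\ast}\circ i)(x,x^{\ast})\big)-\log_2\epsilon$, then $(\mathcal{A}^n h)(x,x^{\ast})-\epsilon\le(\mathcal{A}^{\infty}h)(x,x^{\ast})$.
   Context: $X^{\ast}$ is the dual of $X$ with pairing $\langle\cdot,\cdot\rangle$. The dual of $X\times X^{\ast}$ is identified with $X^{\ast}\times X$ via $\langle (x,x^{\ast}),(y^{\ast},y)\rangle=\langle x,y^{\ast}\rangle+\langle y,x^{\ast}\rangle$; for $g:X\times X^{\ast}\to\mathbb{R}\cup\{+\infty\}$, $g^{\ast}(y^{\ast},y)=\sup_{(z,z^{\ast})}\{\langle z,y^{\ast}\rangle+\langle y,z^{\ast}\rangle-g(z,z^{\ast})\}$, and $i(z,z^{\ast})=(z^{\ast},z)$. For a maximally monotone $T:X\rightrightarrows X^{\ast}$, $\mathcal{H}(T)$ is the family of lower semicontinuous convex functions $h:X\times X^{\ast}\to\mathbb{R}\cup\{+\infty\}$ with $h(z,z^{\ast})\ge\langle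 z,z^{\ast}\rangle$ everywhere and $h(z,z^{\ast})=\langle z,z^{\ast}\rangle$ whenever $z^{\ast}\in T(z)$; $\mathcal{H}$ is the union of $\mathcal{H}(T)$ over all maximally monotone $T$. $\mathcal{A}h:=\tfrac12(h+h^{\ast}\circ i)$, $\mathcal{A}^n$ is its $n$-th iterate, and $\mathcal{A}^{\infty}h$ is the pointwise limit (equivalently infimum) of the pointwise non-increasing sequence $\{\mathcal{A}^n h\}_{n\ge1}$. The convention $\log_2 0=-\infty$ applies. *)

From HB Require Import structures.
From mathcomp Require Import all_boot all_order all_algebra.
From mathcomp Require Import all_classical all_reals all_analysis.
Set Implicit Arguments. Unset Strict Implicit. Unset Printing Implicit Defensive.
Import Order.TTheory GRing.Theory Num.Theory.
Import numFieldNormedType.Exports.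
Local Open Scope classical_set_scope.
Local Open Scope ring_scope.

(* Real Banach space X over a realType R.  Elements of the dual X^* are
   represented as functions X -> R satisfying [is_dual]; the pairing
   <x, x^*> is application x^* x. *)
Section Defs.
Context {R : realType} {X : normedModType R}.

Definition is_dual (f : X -> R) : Prop :=
  (forall (a : R) (x y : X), f (a *: x + y) = a * f x + f y) /\ continuous f.

Definition dnorm (f : X -> R) : R :=
  sup [set `|f x| | x in [set x : X | `|x| <= 1]].

Definition reflexive_space : Prop :=
  forall Phi : (X -> R) -> R,
    (forall (a : R) (f g : X -> R), is_dual f -> is_dual g ->
        Phi (fun z => a * f z + g z) = a * Phi f + Phi g) ->
    (exists C : R, forall f, is_dual f -> `|Phi f| <= C * dnorm f) ->
    exists x : X, forall f, is_dual f -> Phi f = f x.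

(* set-valued operators T : X ⇉ X^*, given by their graph *)
Definition monotone_op (T : X -> (X -> R) -> Prop) : Prop :=
  forall x xs y ys, T x xs -> T y ys -> 0 <= xs (x - y) - ys (x - y).

Definition maximally_monotone (T : X -> (X -> R) -> Prop) : Prop :=
  [/\ forall x xs, T x xs -> is_dual xs,
      monotone_op T &
      forall y ys, is_dual ys ->
        (forall x xs, T x xs -> 0 <= ys (y - x) - xs (y - x)) -> T y ys].

Definition lsc_XXs (h : X -> (X -> R) -> \bar R) : Prop :=
  forall x xs, is_dual xs -> forall r : R, (r%:E < h x xs)%E ->
    exists2 d : R, 0 < d & forall y ys, is_dual ys -> `|y - x| < d ->
      dnorm (fun z => ys z - xs z) < d -> (r%:E < h y ys)%E.

Definition convex_XXs (h : X -> (X -> R) -> \bar R) : Prop :=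
  forall (x y : X) (xs ys : X -> R) (l : R), is_dual xs -> is_dual ys -> 0 < l < 1 ->
    (h (l *: x + (1 - l) *: y)%R (fun z => l * xs z + (1 - l) * ys z)%R
      <= l%:E * h x xs + (1 - l)%:E * h y ys)%E.

Definition in_HT (T : X -> (X -> R) -> Prop) (h : X -> (X -> R) -> \bar R)
  : Prop :=
  [/\ lsc_XXs h, convex_XXs h,
      (forall x xs, is_dual xs -> ((xs x)%:E <= h x xs)%E) &
      (forall x xs, T x xs -> h x xs = (xs x)%:E)].

Definition in_H (h : X -> (X -> R) -> \bar R) : Prop :=
  exists T, maximally_monotone T /\ in_HT T h.

(* conjI h (x,xs) = sup over (w,ws) of  ws x + xs w - h w ws ,  i.e. (h^* o i)(x,xs) *)
Definition conjI (h : X -> (X -> R) -> \bar R) (x : X) (xs : X -> R)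
  : \bar R :=
  ereal_sup [set e | exists w ws, is_dual ws /\
                       e = ((xs w + ws x)%:E - h w ws)%E].

Definition Aop (h : X -> (X -> R) -> \bar R) : X -> (X -> R) -> \bar R :=
  fun x xs => ((h x xs + conjI h x xs) * (2^-1)%:E)%E.

Definition Aiter (n : nat) (h : X -> (X -> R) -> \bar R) :=
  iter n Aop h.

(* A^oo h = pointwise infimum of A^n h, n >= 1 *)
Definition Ainf (h : X -> (X -> R) -> \bar R) (x : X) (xs : X -> R)
  : \bar R :=
  ereal_inf (range (fun n : nat => Aiter n.+1 h x xs)).

End Defs.

(* log_2 on extended reals, with log_2 0 = -oo (nonpositive finite
   arguments are sent to -oo) *)
Definition log2e {R : realType} (e : \bar R) : \bar R :=
  match e with
  | EFin r => if r <= 0 then -oo%E else (ln r / ln 2)%:E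
  | +oo%E => +oo%E
  | -oo%E => -oo%E
  end.

From HB Require Import structures.
From mathcomp Require Import all_boot all_order all_algebra.
From mathcomp Require Import all_classical all_reals all_analysis.
From mathcomp Require Import ring lra.
Set Implicit Arguments. Unset Strict Implicit. Unset Printing Implicit Defensive.
Import Order.TTheory GRing.Theory Num.Theory.
Import numFieldNormedType.Exports.
Local Open Scope classical_set_scope.
Local Open Scope ring_scope.

(* The operator A pulls a function g towards its conjugate g^*∘i: since
   (g^*∘i)^*∘i <= g, we get (Ag)^*∘i <= (g^*∘i + g)/2 = Ag.  Hence the
   iterates A^n h decrease, their conjugates increase, and every conjugate
   (A^m h)^*∘i lies below every iterate, hence below A^∞h.  At the point
   (x, xs), writing a_n for A^n h and b_n for its conjugate,
   a_(n+1) - b_(n+1) <= (a_n - b_n)/2, so a_n - eps <= b_n <= A^∞h as soon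
   as 2^(n-1) eps >= a_1 - b_1.  Since b_1 <= a_1, the maximum in the
   statement is a_1, and a_1 = +oo makes every a_n, hence A^∞h, infinite. *)

(* [Aop g x xs] is [avg (g x xs) (conjI g x xs)]. *)
Local Notation avg a b := (((a + b) * (2^-1)%:E)%E).

Section ExtendedAverage.
Context {R : realFieldType}.
Local Open Scope ereal_scope.
Implicit Types (a b c d : \bar R) (r : R).

Lemma leeB_swap r a b : r%:E - a <= b -> r%:E - b <= a.
Proof.
by case: a => [a||]; case: b => [b||]; rewrite /= ?leey ?leNye // !lee_fin; lra.
Qed.

Lemma EFinB_gtNy r a : a < +oo -> -oo < r%:E - a.
Proof. by case: a => [a||] //= _; rewrite ltNyr. Qed.

Lemma avg_le a b c d : a <= c -> b <= d -> avg a b <= avg c d.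
Proof. by move=> ac bd; rewrite lee_wpmul2r ?lee_fin ?invr_ge0 ?leeD. Qed.

Lemma avg_le_l a b : b <= a -> avg a b <= a.
Proof.
case: a => [a||]; case: b => [b||] //=; rewrite ?leey ?leNye //.
- by rewrite -EFinD -EFinM !lee_fin; lra.
all: by move=> _; rewrite /= ?mulyr ?mulNyr gtr0_sg // mul1e ?leNye ?leey.
Qed.

Lemma avg_gtNy a b : -oo < a -> -oo < b -> -oo < avg a b.
Proof.
case: a => [a||]; case: b => [b||] //= _ _;
  by rewrite /= ?mulyr ?gtr0_sg // ?mul1e ?ltNyr ?ltNye.
Qed.

Lemma avg_lty a b : a < +oo -> b < +oo -> avg a b < +oo.
Proof.
case: a => [a||]; case: b => [b||] //= _ _;
  by rewrite /= ?mulNyr ?gtr0_sg // ?mul1e ?ltey ?ltNye.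
Qed.

Lemma avgye b : -oo < b -> avg +oo b = +oo.
Proof. by case: b => [b||] //= _; rewrite /= mulyr gtr0_sg // mul1e. Qed.

Lemma EFinB_avg_le r a b : -oo < a -> -oo < b ->
  r%:E - avg a b <= avg (r%:E - a) (r%:E - b).
Proof.
case: a => [a||]; case: b => [b||] //= _ _; rewrite ?leey ?leNye //.
- by rewrite -!EFinD -!EFinM lee_fin; lra.
all: by rewrite /= ?mulyr ?mulNyr gtr0_sg // mul1e ?leNye ?leey.
Qed.

End ExtendedAverage.

Section RealInequalities.
Context {R : realFieldType}.

Lemma ler_of_mul_lt1 (c d : R) : (forall l, 0 < l < 1 -> l * c <= d) -> c <= d.
Proof.
move=> H; rewrite leNgt; apply/negP => dc.
have half01 : 0 < (2 : R)^-1 < 1 by rewrite invr_gt0 invf_lt1 //; lra.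
have := H _ half01; have [d0|d0] := ltP d 0; first by nra.
have c0 : 0 < c by lra.
pose l := (c + d) / (2 * c).
have lc : l * c = (c + d) / 2 by rewrite /l; field; lra.
have l01 : 0 < l < 1.
  by rewrite /l divr_gt0 ?ltr_pdivrMr ?mulr_gt0 //=; lra.
by have := H _ l01; rewrite lc; lra.
Qed.

(* The hypothesis is the expansion of
   <l (z, zs) + (1 - l) (w, ws)> <= l h(z, zs) + (1 - l) h(w, ws),
   with p = <z, zs> = h(z, zs), s1 = <w, zs>, s2 = <z, ws>, r = <w, ws>
   and a = h(w, ws). *)
Lemma pairing_convex_bound (p s1 s2 r a : R) :
  (forall l, 0 < l < 1 ->
     l ^+ 2 * p + l * (1 - l) * (s1 + s2) + (1 - l) ^+ 2 * r <= l * p + (1 - l) * a) ->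
  s1 + s2 - a <= p.
Proof.
move=> H; suff : s1 + s2 - p - r <= a - r by lra.
by apply: ler_of_mul_lt1 => l l01; have := H l l01; case/andP: l01 => _ l1; nra.
Qed.

Lemma halving_gap (a b : nat -> R) :
  (forall k, a k.+1 = (a k + b k) / 2) -> (forall k, b k <= b k.+1) ->
  forall k, (a k - b k) * 2 ^+ k <= a 0%N - b 0%N.
Proof.
move=> aS bS; elim=> [|k IH]; first by rewrite expr0 mulr1.
apply: le_trans IH; rewrite exprS mulrCA mulrA ler_wpM2r ?exprn_ge0 //.
by rewrite aS; have := bS k; lra.
Qed.

End RealInequalities.

Lemma log2e_lt_nat_le {R : realType} (D eps : R) (k : nat) : 0 < eps ->
  (1 + log2e D%:E - log2e eps%:E < k.+1%:R%:E)%E -> D <= eps * 2 ^+ k.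
Proof.
move=> eps0; have pow0 : 0 < 2 ^+ k :> R by rewrite exprn_gt0.
rewrite /log2e (lt_geF eps0); case: ifPn => [D0|]; first by nra.
rewrite -ltNge -!EFinD lte_fin -natr1 => D0 ltk.
have ln2 : 0 < ln (2 : R) by rewrite ln_gt0 //; lra.
have : (ln D - ln eps) / ln 2 < k%:R by rewrite mulrBl; lra.
rewrite ltr_pdivrMr // mulr_natl -lnXn // => ltD.
have : ln D < ln (eps * 2 ^+ k) by rewrite lnM ?posrE //; lra.
by rewrite ltr_ln ?posrE ?mulr_gt0 // => /ltW.
Qed.

Section Conjugate.
Context {R : realType} {X : normedModType R}.
Implicit Types (g : X -> (X -> R) -> \bar R) (x w z : X) (xs ws zs : X -> R).

Lemma dual0 xs : is_dual xs -> xs 0 = 0.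
Proof. by case=> lin _; have := lin 1 0 0; rewrite scale1r addr0 mul1r; lra. Qed.

Lemma dual_comb_pt xs (a b : R) x w : is_dual xs ->
  xs (a *: x + b *: w) = a * xs x + b * xs w.
Proof.
move=> dxs; have xs0 := dual0 dxs; case: dxs => lin _.
by rewrite lin -[b *: w]addr0 lin xs0 addr0.
Qed.

Lemma is_dual_comb xs ws (a b : R) : is_dual xs -> is_dual ws ->
  is_dual (fun z => a * xs z + b * ws z).
Proof.
move=> [lxs cxs] [lws cws]; split=> [c u v|t]; first by rewrite lxs lws; ring.
by apply: cvgD; apply: cvgM; [exact: cvg_cst| exact: cxs| exact: cvg_cst| exact: cws].
Qed.

Local Open Scope ereal_scope.

Lemma conjI_ge g x xs w ws : is_dual ws ->
  (xs w + ws x)%:E - g w ws <= conjI g x xs.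
Proof. by move=> dws; apply: ereal_sup_ubound; exists w, ws. Qed.

Lemma conjI_le g x xs e :
  (forall w ws, is_dual ws -> (xs w + ws x)%:E - g w ws <= e) -> conjI g x xs <= e.
Proof. by move=> le_e; apply: ge_ereal_sup => _ [w [ws [dws ->]]]; exact: le_e. Qed.

Lemma le_conjI g1 g2 x xs : (forall w ws, is_dual ws -> g1 w ws <= g2 w ws) ->
  conjI g2 x xs <= conjI g1 x xs.
Proof.
move=> le_g; apply: conjI_le => w ws dws.
by apply: le_trans (conjI_ge _ _ _ _ dws); apply: leeB => //; apply: le_g.
Qed.

Lemma conjI_conjI_le g x xs : is_dual xs -> conjI (conjI g) x xs <= g x xs.
Proof.
move=> dxs; apply: conjI_le => w ws dws; apply: leeB_swap.
by rewrite (addrC (xs w)); exact: conjI_ge.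
Qed.

Lemma conjI_Aop_le g x xs : is_dual xs ->
  (forall w ws, is_dual ws -> -oo < g w ws) ->
  (forall w ws, is_dual ws -> -oo < conjI g w ws) ->
  conjI (Aop g) x xs <= Aop g x xs.
Proof.
move=> dxs g_gtNy conj_gtNy.
have conj_le_avg : conjI (Aop g) x xs <= avg (conjI g x xs) (conjI (conjI g) x xs).
  apply: conjI_le => w ws dws.
  apply: le_trans (EFinB_avg_le _ (g_gtNy _ _ dws) (conj_gtNy _ _ dws)) _.
  by apply: avg_le; apply: conjI_ge.
apply: le_trans conj_le_avg _; rewrite /Aop addeC; apply: avg_le => //.
exact: conjI_conjI_le.
Qed.

(* Stable under [Aop]; it keeps the conjugate away from -oo. *)
Definition bi_proper g :=
  (forall w ws, is_dual ws -> -oo < g w ws) /\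
  exists z zs, [/\ is_dual zs, g z zs < +oo & conjI g z zs < +oo].

Lemma bi_proper_conjI_gtNy g w ws : bi_proper g -> -oo < conjI g w ws.
Proof.
move=> [_ [z [zs [dzs gz _]]]].
by apply: lt_le_trans (conjI_ge _ _ _ z dzs); apply: EFinB_gtNy.
Qed.

Lemma bi_proper_Aop_le g x xs : bi_proper g -> is_dual xs ->
  conjI (Aop g) x xs <= Aop g x xs.
Proof.
move=> gP dxs; apply: conjI_Aop_le => // w ws dws; first by case: gP => + _; apply.
exact: bi_proper_conjI_gtNy.
Qed.

Lemma bi_proper_Aop g : bi_proper g -> bi_proper (Aop g).
Proof.
move=> gP; have conj_gtNy w ws := bi_proper_conjI_gtNy w ws gP.
case: (gP) => g_gtNy [z [zs [dzs gz conjz]]]; split.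
  by move=> w ws dws; apply: avg_gtNy => //; apply: g_gtNy.
exists z, zs; have Agz : Aop g z zs < +oo by exact: avg_lty.
by split=> //; apply: le_lt_trans Agz; apply: bi_proper_Aop_le.
Qed.

End Conjugate.

Section Representative.
Context {R : realType} {X : normedModType R}.
Implicit Types (T : X -> (X -> R) -> Prop) (h : X -> (X -> R) -> \bar R).

Lemma is_dual0 : is_dual (fun _ : X => 0 : R).
Proof. by split=> [*|t]; [rewrite mulr0 addr0 | exact: cvg_cst]. Qed.

Lemma maximally_monotone_graph_neq0 T : maximally_monotone T -> exists z zs, T z zs.
Proof.
move=> [_ _ maxT]; apply/not_existsP => T0; apply: (T0 0); exists (fun=> 0).
by apply: maxT; [exact: is_dual0 | move=> x xs Txs; case: (T0 x); exists xs].
Qed.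

Local Open Scope ereal_scope.

Lemma conjI_le_pairing h z zs : convex_XXs h ->
  (forall x xs, is_dual xs -> (xs x)%:E <= h x xs) ->
  is_dual zs -> h z zs = (zs z)%:E -> conjI h z zs <= (zs z)%:E.
Proof.
move=> hcvx h_ge dzs hz; apply: conjI_le => w ws dws.
case hw: (h w ws) => [a||]; last 2 first.
- by rewrite leNye.
- by have := h_ge w _ dws; rewrite hw leeNy_eq.
rewrite -EFinB lee_fin; apply: (@pairing_convex_bound _ _ _ _ (ws w)) => l l01.
have := hcvx z w zs ws l dzs dws l01; rewrite hz hw -!EFinM -EFinD.
move/(le_trans (h_ge _ _ (is_dual_comb l (1 - l) dzs dws))); rewrite lee_fin.
by rewrite (dual_comb_pt _ _ _ _ dzs) (dual_comb_pt _ _ _ _ dws); lra.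
Qed.

Lemma in_H_bi_proper h : in_H h -> bi_proper h.
Proof.
move=> [T [Tmax [_ hcvx h_ge hT]]]; split.
  by move=> w ws dws; apply: lt_le_trans (h_ge _ _ dws); rewrite ltNyr.
have [z [zs Tz]] := maximally_monotone_graph_neq0 Tmax.
have dzs : is_dual zs by case: Tmax => /(_ _ _ Tz).
exists z, zs; split; rewrite ?hT ?ltry //.
by apply: le_lt_trans (ltry (zs z)); apply: conjI_le_pairing => //; apply: hT.
Qed.

End Representative.

Section Iterates.
Context {R : realType} {X : normedModType R}.

Lemma AiterS k (g : X -> (X -> R) -> \bar R) : Aiter k.+1 g = Aop (Aiter k g).
Proof. by []. Qed.

Variable h : X -> (X -> R) -> \bar R.
Hypothesis hH : in_H h.
Local Open Scope ereal_scope.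

Lemma bi_proper_Aiter k : bi_proper (Aiter k h).
Proof. by elim: k => [|k IH]; [exact: in_H_bi_proper | exact: bi_proper_Aop]. Qed.

Lemma conjI_Aiter_le k x xs : is_dual xs ->
  conjI (Aiter k.+1 h) x xs <= Aiter k.+1 h x xs.
Proof. exact/bi_proper_Aop_le/bi_proper_Aiter. Qed.

Lemma Aiter_le n m x xs : (n <= m)%N -> is_dual xs ->
  Aiter m.+1 h x xs <= Aiter n.+1 h x xs.
Proof.
move=> /subnK <- dxs; elim: (m - n)%N => [|k IH] //.
by apply: le_trans IH; apply/avg_le_l/conjI_Aiter_le.
Qed.

Lemma conjI_Aiter_le_Aiter n m x xs : is_dual xs ->
  conjI (Aiter n.+1 h) x xs <= Aiter m.+1 h x xs.
Proof.
move=> dxs; have [nm|/ltnW mn] := leqP n m.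
  by apply: le_trans (conjI_Aiter_le m x dxs); apply: le_conjI => w ws; apply: Aiter_le.
by apply: le_trans (conjI_Aiter_le n x dxs) _; apply: Aiter_le.
Qed.

Lemma conjI_Aiter_le_Ainf n x xs : is_dual xs ->
  conjI (Aiter n.+1 h) x xs <= Ainf h x xs.
Proof.
by move=> dxs; apply: le_ereal_inf_tmp => _ [m _ <-]; apply: conjI_Aiter_le_Aiter.
Qed.

Lemma Ainf_eqy x xs : Aop h x xs = +oo -> Ainf h x xs = +oo.
Proof.
move=> Ahy; have Aiter_eqy m : Aiter m.+1 h x xs = +oo.
  elim: m => [//|m IH]; rewrite AiterS /Aop IH avgye //.
  exact: bi_proper_conjI_gtNy _ _ (bi_proper_Aiter m.+1).
by apply/eqP; rewrite eq_le leey; apply: le_ereal_inf_tmp => _ [m _ <-]; rewrite Aiter_eqy.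
Qed.

Variables (x : X) (xs : X -> R).
Hypotheses (dxs : is_dual xs) (Ah_lty : Aop h x xs < +oo).

Lemma Aiter_fin_num k :
  Aiter k.+1 h x xs \is a fin_num /\ conjI (Aiter k.+1 h) x xs \is a fin_num.
Proof.
have conj_gtNy : -oo < conjI (Aop h) x xs.
  exact: bi_proper_conjI_gtNy _ _ (bi_proper_Aiter 1).
have lb : -oo < conjI (Aiter k.+1 h) x xs.
  by apply: lt_le_trans conj_gtNy _; apply: le_conjI => w ws /(Aiter_le w (leq0n k)).
have ub : Aiter k.+1 h x xs < +oo.
  exact: le_lt_trans (Aiter_le x (leq0n k) dxs) Ah_lty.
have le_conjA := conjI_Aiter_le k x dxs.
by rewrite !fin_numElt lb ub (lt_le_trans lb le_conjA) (le_lt_trans le_conjA ub).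
Qed.

Lemma Aiter_gap_le k (eps : R) :
  (fine (Aop h x xs - conjI (Aop h) x xs) <= eps * 2 ^+ k)%R ->
  Aiter k.+1 h x xs - eps%:E <= conjI (Aiter k.+1 h) x xs.
Proof.
pose a i := fine (Aiter i.+1 h x xs); pose b i := fine (conjI (Aiter i.+1 h) x xs).
have aE i : Aiter i.+1 h x xs = (a i)%:E by rewrite fineK //; case: (Aiter_fin_num i).
have bE i : conjI (Aiter i.+1 h) x xs = (b i)%:E by rewrite fineK //; case: (Aiter_fin_num i).
have aS i : a i.+1 = ((a i + b i) / 2)%R by rewrite /a AiterS /Aop aE bE.
have bS i : (b i <= b i.+1)%R.
  by rewrite -lee_fin -!bE; apply: le_conjI => w ws; apply: Aiter_le.
rewrite -[Aop h]/(Aiter 1 h) !aE !bE -EFinB /= => gap_0.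
rewrite lee_fin lerBlDr -lerBlDl -(@ler_pM2r _ (2 ^+ k)) ?exprn_gt0 //.
exact: le_trans (halving_gap aS bS k) gap_0.
Qed.

End Iterates.

Theorem theorem2p4 (R : realType) (X : completeNormedModType R)
  (h : X -> (X -> R) -> \bar R) (x : X) (xs : X -> R) :
  reflexive_space (X := X) -> in_H h -> is_dual xs ->
  ((Order.max (Aop h x xs) (conjI (Aop h) x xs) = +oo%E ->
      Ainf h x xs = +oo%E) /\
   (forall (eps : R) (n : nat),
      (Order.max (Aop h x xs) (conjI (Aop h) x xs) < +oo)%E ->
      0 < eps -> (1 <= n)%N ->
      ((n%:R)%:E > 1%E + log2e (Aop h x xs - conjI (Aop h) x xs)
                     - log2e eps%:E)%E ->
      (Aiter n h x xs - eps%:E <= Ainf h x xs)%E)).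
Proof.
move=> _ hH dxs.
have conj_le_Ah := bi_proper_Aop_le x (in_H_bi_proper hH) dxs.
rewrite (max_l conj_le_Ah).
split; first exact: Ainf_eqy.
move=> eps [//|k] Ah_lty eps0 _ gap_log.
apply: le_trans (conjI_Aiter_le_Ainf hH k x dxs).
apply: (Aiter_gap_le hH dxs Ah_lty); apply: log2e_lt_nat_le => //.
have [A_fin conj_fin] := Aiter_fin_num hH dxs Ah_lty 0.
by rewrite fineK // fin_numB; apply/andP.
Qed.
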